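(* Let $G$ be a connected graph with $n\geq 3$ vertices. If $G$ has $k>0$ basis forced vertices, then $|E(G)|\leq \frac{n(n-1)}{2}-2k$.
   Context: All graphs are finite and simple. For vertices $u,v$ of a connected graph $G$, $d(u,v)$ is the length of a shortest $u$–$v$ path. A set $R\subseteq V(G)$ is a resolving set if for all distinct $x,y\in V(G)$ there is $r\in R$ with $d(r,x)\neq d(r,y)$. The metric dimension $\dim(G)$ is the minimum cardinality of a resolving set, and a resolving set of cardinality $\dim(G)$ is a metric basis. A vertex is a basis forced vertex if it belongs to every metric basis of $G$. *)

From mathcomp Require Import all_boot all_order.
Set Implicit Arguments. Unset Strict Implicit. Unset Printing Implicit Defensive.

Definition simple_graph (T : finType) (e : rel T) : Prop :=
  symmetric e /\ irreflexive e.

Definition connected_graph (T : finType) (e : rel T) : Prop :=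
  forall x y : T, connect e x y.

Definition walk_len (T : finType) (e : rel T) (x y : T) (n : nat) : bool :=
  [exists p : n.-tuple T, path e x p && (last x p == y)].

(* d(x,y): least length of an x-y walk (= shortest path length); for a
   connected graph this is < #|T|, so the bound #|T| is never reached. *)
Definition dist (T : finType) (e : rel T) (x y : T) : nat :=
  \big[minn/#|T|]_(n < #|T| | walk_len e x y n) n.

Definition resolving (T : finType) (e : rel T) (R : {set T}) : Prop :=
  forall x y : T, x != y -> exists2 r, r \in R & dist e r x != dist e r y.

Definition metric_basis (T : finType) (e : rel T) (B : {set T}) : Prop :=
  resolving e B /\ forall R : {set T}, resolving e R -> #|B| <= #|R|.

Definition basis_forced (T : finType) (e : rel T) (v : T) : Prop :=
  forall B : {set T}, metric_basis e B -> v \in B.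

Definition edge_set (T : finType) (e : rel T) : {set {set T}} :=
  [set E : {set T} | [exists x, exists y, e x y && (E == [set x; y])]].

From mathcomp Require Import all_boot all_order.
Set Implicit Arguments. Unset Strict Implicit. Unset Printing Implicit Defensive.

(* Let v be basis forced and B a metric basis, so v is in B.  Call x, y twins
   when B :\ v does not separate them.  By minimality of B some twins exist,
   and no exchange u |: (B :\ v) with u outside B resolves, since it would be
   a metric basis avoiding v.  Twins have different distances to v, so a twin
   class holds at most one neighbour of v.  If v had at most one non-neighbour
   n outside B, every twin pair would be {v, n}, {v, a} or {n, a} with a a
   neighbour of v outside B; the exchanges with n, then with the neighbour
   twin a of v, then with the neighbour twin a' of n, cannot all fail.  So
   every forced vertex has two non-neighbours outside B, hence outside the set
   F of forced vertices, and these 2 |F| non-edges, each with exactly one end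
   in F, are distinct. *)

Section Distance.
Variables (T : finType) (e : rel T).

Lemma walk_len0 x y : walk_len e x y 0 = (x == y).
Proof.
apply/existsP/eqP => [[p]|->]; first by rewrite tuple0 => /eqP.
by exists [tuple]; rewrite /= eqxx.
Qed.

Lemma walk_len1 x y : walk_len e x y 1 = e x y.
Proof.
apply/existsP/idP => [[p]|exy]; last by exists [tuple y]; rewrite /= exy eqxx.
by case/tupleP: p => z p; rewrite tuple0 /= andbT => /andP[exz /eqP <-].
Qed.

Lemma dist_le x y n : n < #|T| -> walk_len e x y n -> dist e x y <= n.
Proof.
move=> ltnT wxy; rewrite /dist.
have : Ordinal ltnT \in index_enum 'I_#|T| by rewrite mem_index_enum.
elim: (index_enum _) => // i r IHr; rewrite inE big_cons => /orP[/eqP <-|ir].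
  by rewrite wxy geq_minl.
by case: ifP => _; [apply: leq_trans (geq_minr _ _) _|]; apply: IHr.
Qed.

Lemma dist_cases x y : dist e x y = #|T| \/ walk_len e x y (dist e x y).
Proof.
rewrite /dist; apply: (big_ind (fun m => m = #|T| \/ walk_len e x y m)) => //.
- by left.
- by move=> m n; rewrite /minn; case: ifP.
- by move=> i; right.
Qed.

Lemma dist_eq0 x y : (dist e x y == 0) = (x == y).
Proof.
have T_gt0 : 0 < #|T| by apply/card_gt0P; exists x.
apply/eqP/eqP => [|<-]; last by apply/eqP; rewrite -leqn0 dist_le ?walk_len0.
by case: (dist_cases x y) => [-> T0|+ d0]; [rewrite T0 in T_gt0 | rewrite d0 walk_len0 => /eqP].
Qed.

Lemma dist_xx x : dist e x x = 0.
Proof. by apply/eqP; rewrite dist_eq0. Qed.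

Lemma dist_eq1 x y : irreflexive e -> (dist e x y == 1) = e x y.
Proof.
move=> e_irr; have [<-|xy] := eqVneq x y; first by rewrite dist_xx e_irr.
have T_gt1 : 1 < #|T| by apply/card_gt1P; exists x, y.
apply/eqP/idP => [|exy].
  by case: (dist_cases x y) => [-> T1|+ d1]; [rewrite T1 in T_gt1 | rewrite d1 walk_len1].
by apply/eqP; rewrite eqn_leq dist_le ?walk_len1 //= lt0n dist_eq0 xy.
Qed.

End Distance.

Section Resolving.
Variables (T : finType) (e : rel T).

Definition resolvingb (R : {set T}) :=
  [forall x, forall y, (x != y) ==> [exists r in R, dist e r x != dist e r y]].

Lemma resolvingP R : reflect (resolving e R) (resolvingb R).
Proof.
apply: (iffP forallP) => [resR x y xy|resR x].
  by have /forallP/(_ y)/implyP/(_ xy)/exists_inP[r] := resR x; exists r.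
by apply/forallP => y; apply/implyP => /resR[r rR dr]; apply/exists_inP; exists r.
Qed.

Lemma not_resolving R : ~ resolving e R ->
  exists x y, x != y /\ {in R, forall r, dist e r x = dist e r y}.
Proof.
move/resolvingP/forallPn => [x /forallPn[y]]; rewrite negb_imply => /andP[xy].
by move/exists_inPn => same; exists x, y; split=> // r /same/negbNE/eqP.
Qed.

Lemma resolvingT : resolving e [set: T].
Proof. by move=> x y xy; exists x; rewrite ?inE // dist_xx eq_sym dist_eq0. Qed.

Lemma metric_basis_exists : exists B, metric_basis e B.
Proof.
have [|k] := ex_minnP (_ : exists k, [exists R : {set T}, (#|R| == k) && resolvingb R]).
  by exists #|[set: T]|; apply/existsP; exists setT; rewrite eqxx; apply/resolvingP/resolvingT.
case/existsP=> B /andP[/eqP <- /resolvingP resB] minB; exists B; split=> // R resR.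
by apply: minB; apply/existsP; exists R; rewrite eqxx; apply/resolvingP.
Qed.

End Resolving.

Section BasisExchange.
Variables (T : finType) (e : rel T) (B : {set T}) (v : T).
Hypotheses (e_sym : symmetric e) (e_irr : irreflexive e) (B_res : resolving e B).

Local Notation d := (dist e).

Definition twins x y := {in B :\ v, forall b, d b x = d b y}.

Definition out_nbr a := e v a && (a \notin B).

Lemma twins_sym x y : twins x y -> twins y x.
Proof. by move=> txy b /txy. Qed.

Lemma twins_trans x y z : twins x y -> twins y z -> twins x z.
Proof. by move=> txy tyz b bB; rewrite txy ?tyz. Qed.

Lemma twins_notin x y : twins x y -> x != y -> x != v -> x \notin B.
Proof.
move=> txy xy xv; apply: contraNN xy => xB.
by rewrite -(dist_eq0 e) -(txy x) ?dist_xx // !inE xv.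
Qed.

Lemma dist_adj x y : e x y -> d x y = 1.
Proof. by rewrite -dist_eq1 // => /eqP. Qed.

Lemma twins_nbr_eq a b : twins a b -> e v a -> e v b -> a = b.
Proof.
move=> tab va vb; apply/eqP; apply/negP => /negP /B_res[r rB]; apply/negP/negPn.
have [->|rv] := eqVneq r v; first by rewrite !dist_adj.
by apply/eqP/tab; rewrite !inE rv.
Qed.

Lemma out_nbr_adj a : out_nbr a -> e a v.
Proof. by case/andP; rewrite e_sym. Qed.

Lemma out_nbr_twins_eq w a b : twins w a -> twins w b -> out_nbr a -> out_nbr b -> a = b.
Proof.
move=> twa twb /andP[va _] /andP[vb _].
exact: twins_nbr_eq (twins_trans (twins_sym twa) twb) va vb.
Qed.

Lemma exchange_twins u : ~ resolving e (u |: (B :\ v)) ->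
  exists x y, [/\ x != y, twins x y & d u x = d u y].
Proof.
move/not_resolving=> [x [y [xy same]]]; exists x, y; split=> //; last exact/same/setU11.
by move=> b bB; apply: same; rewrite setU1r.
Qed.

Hypothesis no_exchange : forall u, u \notin B -> ~ resolving e (u |: (B :\ v)).

Section UniqueOutNonNeighbor.
Variable n : T.
Hypothesis nonnbr_eq : forall x, x \notin B -> ~~ e v x -> x = n.

Lemma twin_cases x y : twins x y -> x != y -> [\/ x = v, x = n | out_nbr x].
Proof.
move=> txy xy; have [|xv] := eqVneq x v; first by constructor 1.
have xB := twins_notin txy xy xv.
case vx: (e v x); first by constructor 3; rewrite /out_nbr vx.
by constructor 2; apply: nonnbr_eq; rewrite ?vx.
Qed.

(* [r] is any symmetric side condition carried along to the normalised pair. *)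
Lemma twin_pair_cases (r : rel T) x y : symmetric r -> x != y -> twins x y -> r x y ->
  [\/ [/\ v != n, twins v n & r v n],
      exists a, [/\ out_nbr a, twins v a & r v a]
    | exists a, [/\ out_nbr a, twins n a & r n a]].
Proof.
move=> r_sym xy txy rxy; have yx : y != x by rewrite eq_sym.
have tyx := twins_sym txy; have ryx : r y x by rewrite r_sym.
case: (twin_cases txy xy) => [xv|xn|ax]; case: (twin_cases tyx yx) => [yv|yn|ay];
  subst; rewrite ?eqxx // in xy yx.
- by constructor 1.
- by constructor 2; exists y.
- by constructor 1.
- by constructor 3; exists y.
- by constructor 2; exists x.
- by constructor 3; exists x.
- case/andP: ax ay => vx _ /andP[vy _].
  by rewrite (twins_nbr_eq txy vx vy) eqxx in xy.
Qed.

Lemma exchange_cases u : u \notin B ->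
  [\/ [/\ v != n, twins v n & d u v = d u n],
      exists a, [/\ out_nbr a, twins v a & d u v = d u a]
    | exists a, [/\ out_nbr a, twins n a & d u n = d u a]].
Proof.
move=> uB; have [x [y [xy txy dxy]]] := exchange_twins (no_exchange uB).
have r_sym : symmetric (fun x y => d u x == d u y) by move=> ? ?; rewrite eq_sym.
case: (twin_pair_cases r_sym xy txy (introT eqP dxy)) => [[? ? /eqP]|[a]|[a]].
- by constructor 1.
- by case=> ? ? /eqP; constructor 2; exists a.
- by case=> ? ? /eqP; constructor 3; exists a.
Qed.

Lemma unique_out_nonnbr_false : n \notin B -> ~~ e v n -> False.
Proof.
move=> nB vn; have out_nbr_neq a : out_nbr a -> a != n.
  by case/andP=> va _; apply: contraTneq va => ->.
have [a [oa tva dna]] : exists a, [/\ out_nbr a, twins v a & d n v = d n a].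
  case: (exchange_cases nB) => [[vn' _]|//|[a [oa _]]].
    by rewrite dist_xx => /eqP; rewrite dist_eq0 eq_sym (negPf vn').
  by rewrite dist_xx => /esym/eqP; rewrite dist_eq0 eq_sym (negPf (out_nbr_neq a oa)).
have na : ~~ e n a by rewrite -dist_eq1 // -dna dist_eq1 // e_sym.
have [a' [oa' tna' dan]] : exists a', [/\ out_nbr a', twins n a' & d a n = d a a'].
  case: (exchange_cases (andP oa).2) => [[_ _]|[b [ob tvb]]|//].
    by rewrite dist_adj ?out_nbr_adj // => /esym/eqP; rewrite dist_eq1 // e_sym (negPf na).
  by rewrite (out_nbr_twins_eq tvb tva ob oa) dist_adj ?out_nbr_adj // dist_xx.
case: (exchange_cases (andP oa').2) => [[_ tvn _]|[b [ob tvb]]|[b [ob tnb]]].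
- move: dan; rewrite (out_nbr_twins_eq (twins_trans tvn tna') tva oa' oa) dist_xx.
  by move=> /eqP; rewrite dist_eq0 (negPf (out_nbr_neq a oa)).
- rewrite (out_nbr_twins_eq tvb tva ob oa) dist_adj ?out_nbr_adj // => /esym/eqP.
  by rewrite dist_eq1 // e_sym -dist_eq1 // -dan dist_eq1 // e_sym (negPf na).
- rewrite (out_nbr_twins_eq tnb tna' ob oa') dist_xx => /eqP.
  by rewrite dist_eq0 (negPf (out_nbr_neq a' oa')).
Qed.

(* Instantiated with n := v, [nonnbr_eq] says that v has no non-neighbour
   outside B. *)
Lemma no_out_nonnbr_false : n = v -> ~ resolving e (B :\ v) -> False.
Proof.
move=> nv /not_resolving[x [y [xy twxy]]].
have r_sym : symmetric (fun _ _ : T => true) by [].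
have [a [oa tva]] : exists a, out_nbr a /\ twins v a.
  case: (twin_pair_cases r_sym xy twxy isT) => [[]|[a []]|[a []]];
    by rewrite ?nv ?eqxx // => oa tva _; exists a.
case: (exchange_cases (andP oa).2) => [[]|[b []]|[b []]]; rewrite ?nv ?eqxx // => ob tvb;
  by rewrite (out_nbr_twins_eq tvb tva ob oa) dist_adj ?out_nbr_adj // dist_xx.
Qed.

End UniqueOutNonNeighbor.

Lemma two_out_nonnbrs : ~ resolving e (B :\ v) ->
  exists x y, [/\ x != y, x \notin B, y \notin B, ~~ e v x & ~~ e v y].
Proof.
move=> B'_nres.
case: (boolP [exists x, exists y, [&& x != y, x \notin B, y \notin B, ~~ e v x & ~~ e v y]]).
  by case/existsP=> x /existsP[y /and5P[]]; exists x, y.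
move=> /existsPn none; exfalso.
have nonnbr_eq x y : x \notin B -> ~~ e v x -> y \notin B -> ~~ e v y -> x = y.
  move=> xB vx yB vy; apply/eqP/negPn/negP => xy.
  by move/existsPn: (none x) => /(_ y); rewrite xy xB yB vx vy.
case: (pickP [pred n | (n \notin B) && ~~ e v n]) => [n /andP[nB vn]|no_nonnbr].
  by apply: (@unique_out_nonnbr_false n) => // x xB vx; apply: nonnbr_eq.
apply: (@no_out_nonnbr_false v) => // x xB vx.
by have := no_nonnbr x; rewrite /= xB vx.
Qed.

End BasisExchange.

Lemma set2_eq_cases (T : finType) (a b c d : T) :
  [set a; b] = [set c; d] -> (a = c /\ b = d) \/ (a = d /\ b = c).
Proof.
move=> abcd; have /set2P[ac|ad] : a \in [set c; d] by rewrite -abcd set21.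
all: have /set2P[bc|bd] : b \in [set c; d] by rewrite -abcd set22.
all: subst; try by [left | right].
- have dc : d \in [set c; c] by rewrite abcd set22.
  by case/set2P: dc => ->; left.
- have cd : c \in [set d; d] by rewrite abcd set21.
  by case/set2P: cd => ->; right.
Qed.

Lemma double_bin2 n : 2 * 'C(n, 2) = n * (n - 1).
Proof.
rewrite bin2 mul2n halfK oddM subn1; case: n => //= n.
by rewrite andNb subn0.
Qed.

Section Counting.
Variables (T : finType) (e : rel T).
Hypothesis e_simple : simple_graph e.

Lemma mem_edge_set x y : ([set x; y] \in edge_set e) = e x y.
Proof.
rewrite inE; apply/existsP/idP => [[a /existsP[b /andP[eab /eqP/set2_eq_cases]]]|exy].
  by case=> -[-> ->] //; rewrite e_simple.1.
by exists x; apply/existsP; exists y; rewrite exy eqxx.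
Qed.

Lemma edge_set_card2 E : E \in edge_set e -> #|E| == 2.
Proof.
rewrite inE => /existsP[x /existsP[y /andP[exy /eqP ->]]].
by rewrite cards2; case: (eqVneq x y) exy => [->|//]; rewrite e_simple.2.
Qed.

Lemma edges_cross_nonedges_bound (F : {set T}) k :
  {in F, forall v, k <= #|[set x | x \notin F & ~~ e v x]|} ->
  2 * #|edge_set e| + 2 * (k * #|F|) <= #|T| * (#|T| - 1).
Proof.
move=> F_nonnbrs.
pose cross := [set p : T * T | [&& p.1 \in F, p.2 \notin F & ~~ e p.1 p.2]].
pose cross_nonedges := [set [set p.1; p.2] | p in cross].
have card_cross : k * #|F| <= #|cross|.
  have -> : #|cross| = \sum_(v in F) \sum_(x | (x \notin F) && ~~ e v x) 1.
    by rewrite pair_big_dep -sum1_card; apply: eq_bigl => p; rewrite inE.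
  rewrite mulnC -sum_nat_const; apply: leq_sum => v /F_nonnbrs.
  by rewrite sum1dep_card.
have card_cross_nonedges : #|cross_nonedges| = #|cross|.
  apply: card_in_imset => -[a b] [c d]; rewrite !inE /= => /and3P[aF bF _] /and3P[cF dF _].
  by case/set2_eq_cases=> [[-> ->] // | [ad _]]; rewrite ad (negPf dF) in aF.
have disj : edge_set e :&: cross_nonedges = set0.
  apply/setP => E; rewrite in_setI in_set0.
  apply/andP => -[+ /imsetP[[a b] ab_cross E_ab]]; rewrite E_ab /= mem_edge_set.
  by move: ab_cross; rewrite inE => /and3P[_ _ /negPf ->].
have sub2 : edge_set e :|: cross_nonedges \subset [set E : {set T} | #|E| == 2].
  apply/subsetP => E; rewrite in_setU => /orP[/edge_set_card2|/imsetP[[a b] + ->]];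
    rewrite !inE //= cards2 => /and3P[aF bF _].
  by case: (eqVneq a b) aF bF => [->|//] ->.
have := subset_leq_card sub2; rewrite card_draws -(leq_pmul2l (_ : 0 < 2)) // double_bin2.
rewrite cardsU disj cards0 subn0 card_cross_nonedges mulnDr.
by apply: leq_trans; rewrite leq_add2l leq_mul2l card_cross orbT.
Qed.

End Counting.

Lemma basis_forced_out_nonnbrs (T : finType) (e : rel T) (B : {set T}) (v : T) :
  simple_graph e -> metric_basis e B -> basis_forced e v ->
  exists x y, [/\ x != y, x \notin B, y \notin B, ~~ e v x & ~~ e v y].
Proof.
move=> [e_sym e_irr] [B_res B_min] v_forced.
have vB : v \in B by apply: v_forced.
have card_B : #|B| = #|B :\ v|.+1 by rewrite (cardsD1 v B) vB.
apply: two_out_nonnbrs => // [u uB exchange_res|/B_min]; last by rewrite card_B ltnn.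
have : v \in u |: (B :\ v).
  apply: v_forced; split=> // R /B_min; rewrite cardsU1 !inE negb_and uB orbT.
  by rewrite card_B.
by rewrite !inE eqxx /= orbF => /eqP vu; rewrite -vu vB in uB.
Qed.

Unset Implicit Arguments.

Theorem theorem9 (T : finType) (e : rel T) (F : {set T}) :
  simple_graph e -> connected_graph e -> 3 <= #|T| ->
  (forall v : T, v \in F <-> basis_forced e v) ->
  0 < #|F| ->
  2 * #|edge_set e| + 4 * #|F| <= #|T| * (#|T| - 1).
Proof.
move=> e_simple _ _ F_forced _.
have [B B_basis] := metric_basis_exists e.
have F_sub_B v : v \in F -> v \in B by move/F_forced; apply.
have F_nonnbrs : {in F, forall v, 2 <= #|[set x | x \notin F & ~~ e v x]|}.
  move=> v /F_forced v_forced.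
  have [x [y [xy xB yB vx vy]]] := basis_forced_out_nonnbrs e_simple B_basis v_forced.
  apply/card_gt1P; exists x, y; rewrite !inE vx vy !andbT.
  by split=> //; [exact: contra (F_sub_B x) xB | exact: contra (F_sub_B y) yB].
by have := edges_cross_nonedges_bound e_simple F_nonnbrs; rewrite mulnA.
Qed.
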